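(* Let $\mathcal C$ be a set of representatives of the conjugacy classes of $G$. Under the isomorphism $\mathrm{HH}^\bullet(S(V)\#G)\cong\bigoplus_{g\in\mathcal C}\mathrm{HH}^\bullet(S(V),S(V)\otimes g)^{Z(g)}$ (which identifies $\alpha\in\mathrm{HH}^\bullet(S(V),S(V)\otimes g)^{Z(g)}$ with $T^G_{Z(g)}(\alpha)=\sum_{h\in[G/Z(g)]}{}^h\alpha$), the cup product corresponds to the product $\dot\smile$ given as follows: for $\alpha\in\mathrm{HH}^\bullet(S(V),S(V)\otimes g)^{Z(g)}$ and $\beta\in\mathrm{HH}^\bullet(S(V),S(V)\otimes h)^{Z(h)}$ ($g,h\in\mathcal C$), $$\alpha\ \dot\smile\ \beta=\sum_{x\in D}T^{Z(k)}_{{}^yZ(g)\cap{}^{yx}Z(h)}\big({}^y\alpha\smile{}^{yx}\beta\big),$$ where $D$ is a set of representatives of the double cosets $Z(g)\backslash G/Z(h)$, and for each $x\in D$, $k=k(x)\in\mathcal C$ and $y=y(x)\in G$ are chosen so that ${}^yg\cdot{}^{yx}h=k$. Here ${}^y\alpha\smile{}^{yx}\beta$ is the cup product in $\mathrm{HH}^\bullet(S(V),S(V)\#G)^{{}^yZ(g)\cap{}^{yx}Z(h)}$, and the transfer lands in the $k$-component $\mathrm{HH}^\bullet(S(V),S(V)\otimes k)^{Z(k)}$.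
   Context: Let $G$ be a finite group acting linearly on a finite-dimensional complex vector space $V$; fix a $G$-invariant Hermitian inner product; $V^g$ denotes the fixed space of $g$ and $(V^g)^\perp$ its orthogonal complement. $S(V)\#G$ is the skew group algebra. $\mathrm{HH}^\bullet(S(V),S(V)\#G)$ (Hochschild cohomology with cup product) decomposes as $\bigoplus_{g\in G}\mathrm{HH}^\bullet(S(V),S(V)\otimes g)$, where the $g$-component $\mathrm{HH}^\bullet(S(V),S(V)\otimes g)$ is isomorphic to $S(V^g)\otimes\bigwedge^{\bullet-\operatorname{codim}V^g}(V^g)^*\otimes\bigwedge^{\operatorname{codim}V^g}((V^g)^\perp)^*\otimes g$. $G$ acts on $\mathrm{HH}^\bullet(S(V),S(V)\#G)$ by algebra automorphisms (induced from its action on $V$ and conjugation on $S(V)\#G$), mapping the $g$-component to the $xgx^{-1}$-component, ${}^x\alpha$ denoting the image of $\alpha$ under $x$; ${}^yL=yLy^{-1}$ for a subgroup $L$ and ${}^yg=ygy^{-1}$. It is known that $\mathrm{HH}^\bullet(S(V)\#G)\cong\mathrm{HH}^\bullet(S(V),S(V)\#G)^G$ as algebras. $Z(g)$ is the centralizer of $g$ in $G$. For subgroups $J\le L\le G$ and a $G$-algebra $A$, the transfer $T^L_J:A^J\to A^L$ is $T^L_J(a)=\sum_{h\in[L/J]}{}^ha$, with $[L/J]$ a set of left coset representatives. *)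

From HB Require Import structures.
From mathcomp Require Import all_boot all_order all_algebra all_fingroup.
Set Implicit Arguments. Unset Strict Implicit. Unset Printing Implicit Defensive.
Import GRing.Theory.
Local Open Scope ring_scope.

(* An abstract "G-graded G-algebra": a ring A = (+)_{g in G} A_g with
   A_g * A_h <= A_{gh}, and a left action of G by ring automorphisms
   mapping A_g to A_{x g x^-1}.  HH^*(S(V), S(V)#G) with the cup product and
   the G-action of the paper is such a structure.
   Group conventions: mathcomp's  g ^ z = z^-1 g z, so the paper's
   ^x g = x g x^-1 is  g ^ x^-1 , and ^x L = x L x^-1 is  L :^ x^-1. *)
Record graded_Galg (gT : finGroupType) (A : pzRingType)
    (act : gT -> A -> A) (comp : gT -> pred A) : Prop := GradedGalg {
  comp0 : forall g, comp g 0;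
  compB : forall g a b, comp g a -> comp g b -> comp g (a - b);
  compM : forall g h a b, comp g a -> comp h b -> comp (g * h)%g (a * b);
  comp1 : comp 1%g 1;
  comp_decomp : forall a : A, exists f : gT -> A,
      (forall g, comp g (f g)) /\ a = \sum_(g : gT) f g;
  comp_direct : forall f : gT -> A, (forall g, comp g (f g)) ->
      \sum_(g : gT) f g = 0 -> forall g, f g = 0;
  actD : forall x a b, act x (a + b) = act x a + act x b;
  actM : forall x a b, act x (a * b) = act x a * act x b;
  act1r : forall x, act x 1 = 1;
  act1 : forall a, act 1%g a = a;
  actMg : forall x z a, act (x * z)%g a = act x (act z a);
  act_comp : forall x g a, comp g a -> comp (g ^ x^-1)%g (act x a)
}.

Definition fixed_by (gT : finGroupType) (A : Type) (act : gT -> A -> A)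
  (L : {set gT}) (a : A) : Prop := forall x, x \in L -> act x a = a.

Definition transfer (gT : finGroupType) (A : nmodType) (act : gT -> A -> A)
  (L J : {set gT}) (a : A) : A :=
  \sum_(C in lcosets J L) act (repr C) a.

From HB Require Import structures.
From mathcomp Require Import all_boot all_order all_algebra all_fingroup.
Set Implicit Arguments.
Unset Strict Implicit.
Unset Printing Implicit Defensive.
Import GRing.Theory.
Local Open Scope group_scope.
Local Open Scope ring_scope.

(* Both sides are sums of products (a . alpha) * (b . beta) indexed by pairs of
   cosets (a Z(g), b Z(h)).  Transfer is transitive, T^G_K T^K_J = T^G_J, and
   invariant under conjugating subgroup and element simultaneously, so the
   x-summand on the right is T^G_J (alpha * x . beta) with J = Z(g) :&: ^x Z(h).
   Mackey's decomposition finishes the proof: as x runs over the double coset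
   representatives D and w J over G / J, the pairs (w Z(g), w x Z(h)) run
   exactly once over G / Z(g) x G / Z(h). *)

Section LeftCosets.
Local Open Scope group_scope.
Variable gT : finGroupType.
Implicit Types (J K : {group gT}) (X : {set gT}) (a b u v : gT).
Local Notation G := [set: gT].

Lemma mem_repr_lcoset J a : repr (a *: J) \in a *: J.
Proof. exact: mem_repr (lcoset_refl _ _). Qed.

Lemma lcoset_repr J a : repr (a *: J) *: J = a *: J.
Proof. exact/lcoset_eqP/mem_repr_lcoset. Qed.

Lemma lcosets_repr J X U : U \in lcosets J X -> U = repr U *: J.
Proof. by case/lcosetsP=> a _ ->; rewrite lcoset_repr. Qed.

Lemma mem_lcosetsT J a : a *: J \in lcosets J G.
Proof. by apply/lcosetsP; exists a; rewrite ?inE. Qed.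

Lemma mem_repr_lcosets J K U : J \subset K -> U \in lcosets J K -> repr U \in K.
Proof.
move=> sJK /lcosetsP [b bK ->]; case/lcosetP: (mem_repr_lcoset J b) => j jJ ->.
by rewrite groupM // (subsetP sJK).
Qed.

Lemma subcent1M u v : 'C[u] :&: 'C[v] \subset 'C[u * v].
Proof.
by apply/subsetP=> z /setIP [/cent1P zu /cent1P zv]; apply/cent1P/commuteM.
Qed.

Section Tower.
Variables (J K : {group gT}).
Hypothesis sJK : J \subset K.

Definition tower_lcoset (p : {set gT} * {set gT}) := (repr p.1 * repr p.2) *: J.

Let tower := setX (lcosets K G) (lcosets J K).

Lemma tower_lcoset_inj : {in tower &, injective tower_lcoset}.
Proof.
move=> [U V] [U' V'] /setXP [UG VK] /setXP [U'G V'K] /=.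
rewrite /tower_lcoset /= => /lcoset_eqP /lcosetP [j jJ eUV].
have eU : U = U'.
  rewrite (lcosets_repr UG) (lcosets_repr U'G); apply/lcoset_eqP.
  rewrite mem_lcoset -(mulgK (repr V) (repr U)) eUV !mulgA mulVg mul1g.
  by rewrite !groupM ?groupV ?(mem_repr_lcosets sJK) ?(subsetP sJK).
rewrite -{}eU in eUV *; congr pair.
rewrite (lcosets_repr VK) (lcosets_repr V'K); apply/lcoset_eqP/lcosetP.
by exists j; rewrite // -(mulKg (repr U) (repr V)) eUV !mulgA mulVg mul1g.
Qed.

Lemma tower_lcoset_onto : tower_lcoset @: tower = lcosets J G.
Proof.
apply/setP=> W; apply/imsetP/lcosetsP=> [[[U V] _ ->]|[a _ ->]].
  by exists (repr U * repr V); rewrite ?inE.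
case/lcosetP: (mem_repr_lcoset K a) => c cK ea.
exists (a *: K, c^-1 *: J).
  by rewrite inE mem_lcosetsT /= mem_lcosets mulGSid ?sub1set ?groupV.
rewrite /tower_lcoset /= ea; apply/lcoset_eqP; rewrite mem_lcoset.
case/lcosetP: (mem_repr_lcoset J c^-1) => j jJ ->.
by rewrite mulgA mulgK invMg mulgKV groupV.
Qed.

End Tower.

Section DoubleCosets.
Variables (J K : {group gT}) (D : {set gT}).
Hypothesis D_double_coset_repr : forall x, #|D :&: (J :* x * K)| = 1%N.

Lemma double_coset_repr_exists a :
  exists x c d, [/\ x \in D, c \in J, d \in K & x = c * a * d].
Proof.
have /eqP/cards1P [x Dx] := D_double_coset_repr a.
have /setIP [xD /mulsgP [t d /rcosetP [c cJ ->] dK ex]] :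
  x \in D :&: (J :* a * K) by rewrite Dx set11.
by exists x, c, d.
Qed.

Lemma double_coset_repr_uniq x x' :
  x \in D -> x' \in D -> x' \in J :* x * K -> x' = x.
Proof.
move=> xD x'D x'JxK.
have /card_le1_eqP D1 : (#|D :&: (J :* x * K)%g| <= 1)%N.
  by rewrite D_double_coset_repr.
apply: D1; rewrite inE ?x'D // xD; apply/mulsgP.
by exists x 1; rewrite ?rcoset_refl ?group1 ?mulg1.
Qed.

Definition mackey_pair (p : gT * {set gT}) :=
  (repr p.2 *: J, (repr p.2 * p.1) *: K).

Let mackey_dom :=
  [set p : gT * {set gT} | (p.1 \in D) && (p.2 \in lcosets (J :&: K :^ p.1^-1) G)].

Lemma mackey_pair_inj : {in mackey_dom &, injective mackey_pair}.
Proof.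
move=> [x W] [x' W']; rewrite !inE /= => /andP [xD WG] /andP [x'D W'G] [eJ eK].
have /lcosetP [c cJ eW'] : repr W' \in repr W *: J by rewrite eJ lcoset_refl.
have /lcosetP [d dK eW'x'] : repr W' * x' \in (repr W * x) *: K.
  by rewrite eK lcoset_refl.
have ex' : x' = c^-1 * x * d.
  by rewrite -(mulKg (repr W') x') eW'x' {1}eW' invMg !mulgA mulgKV.
have exx' : x' = x.
  apply: double_coset_repr_uniq; rewrite // ex' mem_mulg //.
  by rewrite mem_rcoset mulgK groupV.
rewrite {}exx' in ex' W'G *; congr pair.
rewrite (lcosets_repr WG) (lcosets_repr W'G) eW'.
apply/esym/lcoset_eqP; rewrite mem_lcoset mulKg inE cJ mem_conjg invgK conjgE.
by rewrite {2}ex' !mulgA mulgK mulVg mul1g.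
Qed.

Lemma mackey_pair_onto :
  mackey_pair @: mackey_dom = setX (lcosets J G) (lcosets K G).
Proof.
apply/setP=> -[P Q]; apply/imsetP/setXP=> [[[x W] _ [-> ->]]|].
  by split; apply: mem_lcosetsT.
case=> /lcosetsP [a _ ->] /lcosetsP [b _ ->].
have [x [c [d [xD cJ dK ex]]]] := double_coset_repr_exists (a^-1 * b).
exists (x, (a * c^-1) *: (J :&: K :^ x^-1)%G).
  by rewrite inE xD mem_lcosetsT.
rewrite /mackey_pair /=.
case/lcosetP: (mem_repr_lcoset (J :&: K :^ x^-1)%G (a * c^-1)) => l /setIP [lJ lK] ->.
rewrite mem_conjg invgK in lK.
congr pair; apply/esym/lcoset_eqP; rewrite mem_lcoset.
  by rewrite !mulgA mulVg mul1g groupM ?groupV.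
have bd : a * c^-1 * x = b * d by rewrite ex !mulgA mulgKV mulgV mul1g.
by rewrite -(mulgA _ l) (conjgC l x) (mulgA _ x) bd -(mulgA b) mulKg groupM.
Qed.

End DoubleCosets.
End LeftCosets.

Section Transfer.
Variables (gT : finGroupType) (A : pzRingType) (act : gT -> A -> A).
Hypothesis act_add : forall x a b, act x (a + b) = act x a + act x b.
Hypothesis act_mul : forall x a b, act x (a * b) = act x a * act x b.
Hypothesis act_mulg : forall x z a, act (x * z)%g a = act x (act z a).
Local Notation G := [set: gT].

Lemma act0 x : act x 0 = 0.
Proof. by apply/(addrI (act x 0)); rewrite -act_add !addr0. Qed.

Lemma act_sum x I (r : seq I) (P : pred I) (F : I -> A) :
  act x (\sum_(i <- r | P i) F i) = \sum_(i <- r | P i) act x (F i).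
Proof. exact: (big_morph _ (act_add x) (act0 x)). Qed.

Lemma act_repr_lcoset (J : {group gT}) a u :
  fixed_by act J u -> act (repr (a *: J)%g) u = act a u.
Proof.
by move=> Ju; case/lcosetP: (mem_repr_lcoset J a) => j jJ ->; rewrite act_mulg Ju.
Qed.

Lemma fixed_by_act_conj (L : {set gT}) z u :
  fixed_by act L u -> fixed_by act (L :^ z^-1) (act z u).
Proof.
move=> Lu x; rewrite mem_conjg invgK => Lxz.
by rewrite -act_mulg conjgC act_mulg Lu.
Qed.

Lemma fixed_by_mulI (L M : {set gT}) u v :
  fixed_by act L u -> fixed_by act M v -> fixed_by act (L :&: M) (u * v).
Proof. by move=> Lu Mv x /setIP [xL xM]; rewrite act_mul Lu ?Mv. Qed.

Lemma transfer_trans (J K : {group gT}) u : J \subset K -> fixed_by act J u ->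
  transfer act G K (transfer act K J u) = transfer act G J u.
Proof.
move=> sJK Ju; rewrite /transfer; under eq_bigr do rewrite act_sum.
rewrite pair_big_dep -(tower_lcoset_onto sJK) big_imset /=; last exact: tower_lcoset_inj.
apply: eq_big => [[U V]|[U V] _]; first by rewrite in_setX.
by rewrite /tower_lcoset act_repr_lcoset // act_mulg.
Qed.

Lemma lcoset_conj (L : {set gT}) a z :
  ((a *: L) :* z^-1 = (a * z^-1) *: (L :^ z^-1))%g.
Proof. by rewrite conjsgE invgK -lcosetM mulgKV mulgA. Qed.

Lemma transfer_conj (L : {group gT}) z u : fixed_by act L u ->
  transfer act G (L :^ z^-1) (act z u) = transfer act G L u.
Proof.
move=> Lu; have rinj : injective (fun U : {set gT} => U :* z^-1)%g.
  by move=> U V /(congr1 (fun W => W :* z)%g); rewrite !rcosetKV.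
have onto : ((fun U => U :* z^-1) @: lcosets L G)%g = lcosets (L :^ z^-1) G.
  apply/setP=> W; apply/imsetP/lcosetsP=> [[U /lcosetsP [a _ ->] ->]|[b _ ->]].
    by exists (a * z^-1)%g; rewrite ?inE ?lcoset_conj.
  by exists ((b * z) *: L)%g; rewrite ?mem_lcosetsT ?lcoset_conj ?mulgK.
rewrite /transfer -onto big_imset /=; last by move=> U V _ _; apply: rinj.
apply: eq_bigr => _ /lcosetsP [a _ ->].
rewrite lcoset_conj act_repr_lcoset; last exact: fixed_by_act_conj.
by rewrite -act_mulg mulgKV act_repr_lcoset.
Qed.

Lemma transfer_mul_Mackey (J K : {group gT}) (D : {set gT}) a b :
    (forall x, #|D :&: (J :* x * K)%g| = 1%N) ->
    fixed_by act J a -> fixed_by act K b ->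
  transfer act G J a * transfer act G K b
    = \sum_(x in D) transfer act G (J :&: K :^ x^-1) (a * act x b).
Proof.
move=> HD Ja Kb; rewrite /transfer mulr_suml; under eq_bigr do rewrite mulr_sumr.
rewrite !pair_big_dep /=.
transitivity (\sum_(q in setX (lcosets J G) (lcosets K G))
                 act (repr q.1) a * act (repr q.2) b).
  by apply: eq_bigl => -[U V]; rewrite in_setX.
rewrite -(mackey_pair_onto HD) big_imset /=; last exact: mackey_pair_inj.
apply: eq_big => [[x W]|[x W] _]; first by rewrite inE.
by rewrite !act_repr_lcoset // act_mul act_mulg.
Qed.

End Transfer.

Theorem theorem11p3 (gT : finGroupType) (A : pzRingType)
  (act : gT -> A -> A) (comp : gT -> pred A)
  (HA : graded_Galg act comp)
  (C : {set gT})
  (HC : forall g : gT, #|C :&: (g ^: [set: gT])%g| = 1%N)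
  (g h : gT) (Hg : g \in C) (Hh : h \in C)
  (D : {set gT})
  (HD : forall x : gT, #|D :&: ('C[g] :* x * 'C[h])%g| = 1%N)
  (k y : gT -> gT)
  (Hk : forall x, x \in D -> k x \in C)
  (Hky : forall x, x \in D ->
          (g ^ (y x)^-1 * h ^ (y x * x)^-1)%g = k x)
  (alpha beta : A)
  (Ha : comp g alpha) (Hainv : fixed_by act 'C[g] alpha)
  (Hb : comp h beta) (Hbinv : fixed_by act 'C[h] beta) :
  let L x := ('C[g] :^ (y x)^-1 :&: 'C[h] :^ (y x * x)^-1)%g in
  let ab x := act (y x) alpha * act (y x * x)%g beta in
  (forall x, x \in D ->
     [/\ comp (k x) (ab x), fixed_by act (L x) (ab x) & L x \subset 'C[k x]])
  /\
  transfer act [set: gT] 'C[g] alpha * transfer act [set: gT] 'C[h] beta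
  = \sum_(x in D)
      transfer act [set: gT] 'C[k x] (transfer act 'C[k x] (L x) (ab x)).
Proof.
move=> L ab.
case: HA => _ _ compM _ _ _ act_add act_mul _ _ act_mulg act_comp.
have L_conj x : L x = ('C[g] :&: 'C[h] :^ x^-1) :^ (y x)^-1.
  by rewrite /L conjIg -conjsgM invMg.
have ab_act x : ab x = act (y x) (alpha * act x beta).
  by rewrite /ab act_mul act_mulg.
have fixed_mul_x x : fixed_by act ('C[g] :&: 'C[h] :^ x^-1) (alpha * act x beta).
  by apply: fixed_by_mulI => //; apply: fixed_by_act_conj.
have L_ab x : fixed_by act (L x) (ab x).
  by rewrite L_conj ab_act; apply: fixed_by_act_conj.
have L_sub x : x \in D -> L x \subset 'C[k x].
  by move=> xD; rewrite -Hky // /L -!cent1J subcent1M.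
split=> [x xD|].
  split; [|exact: L_ab|exact: L_sub].
  by rewrite /ab -Hky //; apply: compM; apply: act_comp.
apply: etrans (transfer_mul_Mackey act_mul act_mulg HD Hainv Hbinv) _.
apply: eq_bigr => x xD.
rewrite -(transfer_conj act_mulg (y x) (fixed_mul_x x)) -ab_act -L_conj.
by rewrite (transfer_trans act_add act_mulg (L_sub x xD) (L_ab x)).
Qed.
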